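(* Suppose Assumption 1 holds. Let $\mathbf{x}^*\in\mathcal{X}_0$ satisfy $\mathbf{g}(\mathbf{x}^* )\le\mathbf{0}$ (componentwise). Let $\gamma>0$ and $\eta>0$ be arbitrary and suppose $\alpha\ge\frac12(\gamma^2\beta^2+\eta)$ in Algorithm 1. Then for all $t\ge1$, $$\Delta(t+1)+f^t(\mathbf{x}(t))\le f^t(\mathbf{x}^* )+\alpha\big[\|\mathbf{x}^*-\mathbf{x}(t)\|^2-\|\mathbf{x}^*-\mathbf{x}(t+1)\|^2\big]+\tfrac12\big[\|\tilde{\mathbf{g}}(\mathbf{x}(t+1))\|^2-\|\tilde{\mathbf{g}}(\mathbf{x}(t))\|^2\big]+\frac{D^2}{2\eta}.$$
   Context: Setting: $n,m$ positive integers; $\mathcal{X}_0\subset\mathbb{R}^n$ is a nonempty compact convex set; $\mathbf{g}=(g_1,\ldots,g_m)^{\mathsf T}:\mathbb{R}^n\to\mathbb{R}^m$ with each $g_k$ convex and continuous; $f^t$, $t=0,1,2,\ldots$, are convex differentiable real functions on (a neighborhood of) $\mathcal{X}_0$. All norms are Euclidean. Assumption 1: there are constants $D,\beta,G,R>0$ with $\|\nabla f^t(\mathbf{x})\|\le D$ for all $\mathbf{x}\in\mathcal{X}_0$ and all $t\ge0$; $\|\mathbf{g}(\mathbf{x})-\mathbf{g}(\mathbf{y})\|\le\beta\|\mathbf{x}-\mathbf{y}\|$ for all $\mathbf{x},\mathbf{y}\in\mathcal{X}_0$; $\|\mathbf{g}(\mathbf{x})\|\le G$ for all $\mathbf{x}\in\mathcal{X}_0$;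 $\|\mathbf{x}-\mathbf{y}\|\le R$ for all $\mathbf{x},\mathbf{y}\in\mathcal{X}_0$. Algorithm 1 (parameters $\gamma>0,\alpha>0$): let $\tilde{\mathbf{g}}(\mathbf{x})=\gamma\mathbf{g}(\mathbf{x})$. Choose any $\mathbf{x}(0)\in\mathcal{X}_0$ and set $Q_k(0)=0$ for all $k$. For each $t=0,1,2,\ldots$: set $Q_k(t+1)=\max\{-\tilde g_k(\mathbf{x}(t)),\,Q_k(t)+\tilde g_k(\mathbf{x}(t))\}$ for $k=1,\ldots,m$, and let $\mathbf{x}(t+1)$ be a minimizer over $\mathbf{x}\in\mathcal{X}_0$ of $[\nabla f^t(\mathbf{x}(t))]^{\mathsf T}(\mathbf{x}-\mathbf{x}(t))+[\mathbf{Q}(t+1)+\tilde{\mathbf{g}}(\mathbf{x}(t))]^{\mathsf T}\tilde{\mathbf{g}}(\mathbf{x})+\alpha\|\mathbf{x}-\mathbf{x}(t)\|^2$, where $\mathbf{Q}(t)=(Q_1(t),\ldots,Q_m(t))^{\mathsf T}$. Lyapunov function and drift: $L(t)=\tfrac12\|\mathbf{Q}(t)\|^2$ and $\Delta(t)=L(t+1)-L(t)$. *)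

(* Stdlib Reals.  Vectors of R^n are represented as functions
   nat -> R of which only the coordinates 0..n-1 are used. *)
From Stdlib Require Import Reals Lra Lia.
Open Scope R_scope.

Definition vec := nat -> R.

Fixpoint rsum (n : nat) (f : nat -> R) : R :=
  match n with
  | O => 0
  | S k => rsum k f + f k
  end.

Definition dot (n : nat) (u v : vec) : R := rsum n (fun i => u i * v i).
Definition norm (n : nat) (u : vec) : R := sqrt (dot n u u).

Definition vadd (u v : vec) : vec := fun i => u i + v i.
Definition vsub (u v : vec) : vec := fun i => u i - v i.
Definition vscale (a : R) (u : vec) : vec := fun i => a * u i.

Definition Rn_convex_set (A : vec -> Prop) : Prop :=
  forall x y l, A x -> A y -> 0 <= l <= 1 ->
    A (vadd (vscale l x) (vscale (1 - l) y)).

Definition Rn_open_set (n : nat) (A : vec -> Prop) : Prop :=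
  forall x, A x -> exists r, 0 < r /\ forall y, norm n (vsub y x) < r -> A y.

Definition Rn_seq_converges (n : nat) (u : nat -> vec) (l : vec) : Prop :=
  forall eps, 0 < eps -> exists N, forall k, (N <= k)%nat -> norm n (vsub (u k) l) < eps.

Definition Rn_compact_set (n : nat) (A : vec -> Prop) : Prop :=
  forall u : nat -> vec, (forall k, A (u k)) ->
    exists (phi : nat -> nat) (l : vec),
      (forall k, (phi k < phi (S k))%nat) /\ A l /\ Rn_seq_converges n (fun k => u (phi k)) l.

Definition Rn_convex_on (A : vec -> Prop) (f : vec -> R) : Prop :=
  forall x y l, A x -> A y -> 0 <= l <= 1 ->
    f (vadd (vscale l x) (vscale (1 - l) y)) <= l * f x + (1 - l) * f y.

Definition Rn_continuous_fun (n : nat) (f : vec -> R) : Prop :=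
  forall x eps, 0 < eps -> exists delta, 0 < delta /\
    forall y, norm n (vsub y x) < delta -> Rabs (f y - f x) < eps.

Definition Rn_has_gradient (n : nat) (f : vec -> R) (x d : vec) : Prop :=
  forall eps, 0 < eps -> exists delta, 0 < delta /\
    forall y, norm n (vsub y x) < delta ->
      Rabs (f y - f x - dot n d (vsub y x)) <= eps * norm n (vsub y x).

(** [x(t+1)] minimizes over the convex set [X0] the convex function
    [h y = ∇f^t(x(t))·(y - x(t)) + w·γg(y)], with [w = Q(t+1) + γg(x(t)) >= 0],
    plus [α‖y - x(t)‖²]; the three-point inequality of such strongly convex
    minimization compares [x(t+1)] with [x⋆], where [w·γg(x⋆) <= 0].  The gradient
    inequality for [f^t] turns the linear term into [f^t(x⋆) - f^t(x(t))]; the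
    queue drift is at most [w·γg(x(t+1))] plus the stated quadratic terms and
    [½γ²‖g(x(t+1)) - g(x(t))‖² <= ½γ²β²‖x(t+1) - x(t)‖²]; the leftover
    [-∇f^t(x(t))·(x(t+1) - x(t))] is absorbed by Young's inequality since
    [α >= ½(γ²β² + η)]. *)

From Stdlib Require Import Reals Lra Lia.
Open Scope R_scope.

Definition comb (l : R) (a b : vec) : vec := vadd (vscale l a) (vscale (1 - l) b).

Ltac coordinatewise n :=
  unfold dot, comb, vadd, vsub, vscale; induction n; simpl; lra.

Lemma rsum_le n f g : (forall i, (i < n)%nat -> f i <= g i) -> rsum n f <= rsum n g.
Proof.
  induction n as [|n IH]; simpl; intros H; [lra|].
  apply Rplus_le_compat; [apply IH; intros; apply H | apply H]; lia.
Qed.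

Lemma rsum_zero n : rsum n (fun _ => 0) = 0.
Proof. induction n; simpl; lra. Qed.

Lemma rsum_nonneg n f : (forall i, (i < n)%nat -> 0 <= f i) -> 0 <= rsum n f.
Proof. intros H; rewrite <- (rsum_zero n) at 1; now apply rsum_le. Qed.

Lemma dot_self_nonneg n u : 0 <= dot n u u.
Proof. apply rsum_nonneg; intros i _; apply Rle_0_sqr. Qed.

Lemma norm_nonneg n u : 0 <= norm n u.
Proof. apply sqrt_pos. Qed.

Lemma norm_sqr n u : norm n u ^ 2 = dot n u u.
Proof. unfold norm; rewrite <- Rsqr_pow2; apply Rsqr_sqrt, dot_self_nonneg. Qed.

Lemma dot_nonneg_le0 m w u :
  (forall k, (k < m)%nat -> 0 <= w k) -> (forall k, (k < m)%nat -> u k <= 0) ->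
  dot m w u <= 0.
Proof.
  intros Hw Hu; rewrite <- (rsum_zero m) at 1; apply rsum_le; intros k Hk.
  specialize (Hw k Hk); specialize (Hu k Hk); nra.
Qed.

Lemma dot_sub_comb n d l a b c :
  dot n d (vsub (comb l a b) c) = l * dot n d (vsub a c) + (1 - l) * dot n d (vsub b c).
Proof. coordinatewise n. Qed.

Lemma dot_comb_sub_r n d l a b : dot n d (vsub (comb l a b) b) = l * dot n d (vsub a b).
Proof. coordinatewise n. Qed.

Lemma dot_self_comb_sub n l a b c :
  dot n (vsub (comb l a b) c) (vsub (comb l a b) c) =
  dot n (vsub b c) (vsub b c) + 2 * l * dot n (vsub b c) (vsub a b)
  + l ^ 2 * dot n (vsub a b) (vsub a b).
Proof. coordinatewise n. Qed.

Lemma dot_sub_polarization n a b c :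
  2 * dot n (vsub b c) (vsub a b) =
  dot n (vsub a c) (vsub a c) - dot n (vsub b c) (vsub b c) - dot n (vsub a b) (vsub a b).
Proof. coordinatewise n. Qed.

Lemma dot_self_add_scale n u v e :
  dot n (vadd u (vscale e v)) (vadd u (vscale e v)) =
  dot n u u + 2 * e * dot n u v + e ^ 2 * dot n v v.
Proof. coordinatewise n. Qed.

Lemma dot_self_sub_scale n e u v :
  dot n (vsub (vscale e u) (vscale e v)) (vsub (vscale e u) (vscale e v)) =
  e ^ 2 * dot n (vsub u v) (vsub u v).
Proof. coordinatewise n. Qed.

Lemma dot_add_sub_split n q a b :
  dot n q b + dot n b b =
  dot n (vadd q a) b + / 2 * dot n b b - / 2 * dot n a a + / 2 * dot n (vsub b a) (vsub b a).
Proof. coordinatewise n. Qed.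

Lemma norm_comb_sub_r n l a b : 0 <= l -> norm n (vsub (comb l a b) b) = l * norm n (vsub a b).
Proof.
  intros Hl; unfold norm.
  replace (dot n (vsub (comb l a b) b) (vsub (comb l a b) b))
    with (l ^ 2 * dot n (vsub a b) (vsub a b)) by coordinatewise n.
  rewrite sqrt_mult_alt by apply pow2_ge_0; now rewrite sqrt_pow2.
Qed.

Lemma dot_young n d v e : 0 < e -> - dot n d v <= dot n d d / (2 * e) + e / 2 * dot n v v.
Proof.
  intros He.
  assert (Hsq := dot_self_nonneg n (vadd d (vscale e v))).
  rewrite dot_self_add_scale in Hsq.
  apply Rmult_le_reg_l with (2 * e); [lra|].
  replace (2 * e * (dot n d d / (2 * e) + e / 2 * dot n v v))
    with (dot n d d + e ^ 2 * dot n v v) by (field; lra).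
  lra.
Qed.

Lemma nonneg_of_affine_nonneg_near0 A B :
  0 <= B -> (forall l, 0 < l <= 1 -> 0 <= A + B * l) -> 0 <= A.
Proof.
  intros HB H; apply Rle_plus_epsilon; intros eps Heps.
  set (l := Rmin 1 (eps / (B + 1))).
  assert (Hl : 0 < l <= 1).
  { split; [apply Rmin_glb_lt; [lra | apply Rdiv_lt_0_compat; lra] | apply Rmin_l]. }
  assert (HBl : B * l <= eps).
  { apply Rle_trans with (B * (eps / (B + 1))); [apply Rmult_le_compat_l, Rmin_r; lra|].
    apply Rmult_le_reg_r with (B + 1); [lra|].
    replace (B * (eps / (B + 1)) * (B + 1)) with (B * eps) by (field; lra); nra. }
  specialize (H l Hl); lra.
Qed.

Lemma convex_gradient_ineq n U f x y d :
  Rn_convex_on U f -> U x -> U y -> Rn_has_gradient n f x d ->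
  f x + dot n d (vsub y x) <= f y.
Proof.
  intros Hconv Hx Hy Hgrad.
  set (N := norm n (vsub y x)).
  assert (HN : 0 <= N) by apply norm_nonneg.
  cut (0 <= f y - f x - dot n d (vsub y x)); [lra|].
  apply (nonneg_of_affine_nonneg_near0 _ N HN); intros eps [Heps _].
  destruct (Hgrad eps Heps) as [del [Hdel Hnear]].
  set (l := del / (del + N + 1)).
  assert (Hl : 0 < l <= 1).
  { unfold l; split; [apply Rdiv_lt_0_compat; lra|].
    apply Rmult_le_reg_r with (del + N + 1); [lra|].
    replace (del / (del + N + 1) * (del + N + 1)) with del by (field; lra); lra. }
  assert (HlN : l * N < del).
  { unfold l; apply Rmult_lt_reg_r with (del + N + 1); [lra|].
    replace (del / (del + N + 1) * N * (del + N + 1)) with (del * N) by (field; lra); nra. }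
  specialize (Hnear (comb l y x)).
  rewrite norm_comb_sub_r, dot_comb_sub_r in Hnear by lra.
  fold N in Hnear; specialize (Hnear HlN).
  assert (Hcvx := Hconv y x l Hy Hx ltac:(lra)); fold (comb l y x) in Hcvx.
  assert (Habs := Rle_abs (- (f (comb l y x) - f x - l * dot n d (vsub y x)))).
  rewrite Rabs_Ropp in Habs.
  apply Rmult_le_reg_l with l; lra.
Qed.

Lemma Rn_convex_on_add A f g :
  Rn_convex_on A f -> Rn_convex_on A g -> Rn_convex_on A (fun y => f y + g y).
Proof.
  intros Hf Hg a b l Ha Hb Hl.
  specialize (Hf a b l Ha Hb Hl); specialize (Hg a b l Ha Hb Hl); lra.
Qed.

Lemma Rn_convex_on_dot_sub n A d c : Rn_convex_on A (fun y => dot n d (vsub y c)).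
Proof. intros a b l _ _ _; cbv beta; fold (comb l a b); rewrite dot_sub_comb; lra. Qed.

Lemma Rn_convex_on_dot_nonneg m A w (G : vec -> vec) :
  (forall k, (k < m)%nat -> 0 <= w k) ->
  (forall k, (k < m)%nat -> Rn_convex_on A (fun y => G y k)) ->
  Rn_convex_on A (fun y => dot m w (G y)).
Proof.
  intros Hw HG a b l Ha Hb Hl.
  assert (E : l * dot m w (G a) + (1 - l) * dot m w (G b)
              = rsum m (fun k => w k * (l * G a k + (1 - l) * G b k)))
    by (unfold dot; clear; induction m; simpl; lra).
  rewrite E; apply rsum_le; intros k Hk.
  apply Rmult_le_compat_l; [apply Hw | apply HG]; auto.
Qed.

Lemma prox_three_point n X h a x0 z y :
  Rn_convex_set X -> Rn_convex_on X h -> 0 <= a -> X z -> X y ->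
  (forall y', X y' -> h z + a * norm n (vsub z x0) ^ 2 <= h y' + a * norm n (vsub y' x0) ^ 2) ->
  h z + a * norm n (vsub z x0) ^ 2 + a * norm n (vsub y z) ^ 2 <= h y + a * norm n (vsub y x0) ^ 2.
Proof.
  intros HX Hh Ha Hz Hy Hmin; rewrite !norm_sqr.
  assert (Hpol := dot_sub_polarization n y z x0).
  set (B := a * dot n (vsub y z) (vsub y z)).
  assert (HB : 0 <= B) by (apply Rmult_le_pos; [lra | apply dot_self_nonneg]).
  cut (0 <= h y - h z + a * (2 * dot n (vsub z x0) (vsub y z))).
  { intros Hc; rewrite Hpol in Hc; unfold B; lra. }
  apply (nonneg_of_affine_nonneg_near0 _ B HB); intros l Hl.
  specialize (Hmin (comb l y z) (HX y z l Hy Hz ltac:(lra))).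
  rewrite !norm_sqr, dot_self_comb_sub in Hmin.
  assert (Hcvx := Hh y z l Hy Hz ltac:(lra)); fold (comb l y z) in Hcvx.
  apply Rmult_le_reg_l with l; [lra|]; unfold B in *; nra.
Qed.

Lemma queue_drift_le m Q1 Q2 b :
  (forall k, (k < m)%nat -> Q2 k = Rmax (- b k) (Q1 k + b k)) ->
  / 2 * dot m Q2 Q2 - / 2 * dot m Q1 Q1 <= dot m Q1 b + dot m b b.
Proof.
  unfold dot; induction m as [|m IH]; simpl; intros HQ; [lra|].
  specialize (IH (fun k Hk => HQ k ltac:(lia))).
  rewrite (HQ m ltac:(lia)); unfold Rmax; destruct Rle_dec.
  - pose proof (Rle_0_sqr (b m)); unfold Rsqr in *; nra.
  - pose proof (Rle_0_sqr (Q1 m + b m)); unfold Rsqr in *; nra.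
Qed.

Lemma queue_add_nonneg m Q1 Q2 b :
  (forall k, (k < m)%nat -> Q2 k = Rmax (- b k) (Q1 k + b k)) ->
  forall k, (k < m)%nat -> 0 <= vadd Q2 b k.
Proof.
  intros HQ k Hk; unfold vadd; rewrite (HQ k Hk).
  pose proof (Rmax_l (- b k) (Q1 k + b k)); lra.
Qed.

Theorem lemma8
  (n m : nat) (Hn : (0 < n)%nat) (Hm : (0 < m)%nat)
  (X0 : vec -> Prop)
  (HX0ne : exists x, X0 x) (HX0c : Rn_compact_set n X0) (HX0cv : Rn_convex_set X0)
  (g : vec -> vec)
  (Hgconv : forall k, (k < m)%nat -> Rn_convex_on (fun _ => True) (fun x => g x k))
  (Hgcont : forall k, (k < m)%nat -> Rn_continuous_fun n (fun x => g x k))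
  (f : nat -> vec -> R) (df : nat -> vec -> vec)
  (Hf : forall t, exists U : vec -> Prop,
      Rn_open_set n U /\ Rn_convex_set U /\ (forall x, X0 x -> U x) /\
      Rn_convex_on U (f t) /\ (forall x, U x -> Rn_has_gradient n (f t) x (df t x)))
  (D beta G Rd : R) (HD : 0 < D) (Hbeta : 0 < beta) (HG : 0 < G) (HR : 0 < Rd)
  (HdfD : forall t x, X0 x -> norm n (df t x) <= D)
  (Hlip : forall x y, X0 x -> X0 y -> norm m (vsub (g x) (g y)) <= beta * norm n (vsub x y))
  (HgG : forall x, X0 x -> norm m (g x) <= G)
  (Hdiam : forall x y, X0 x -> X0 y -> norm n (vsub x y) <= Rd)
  (gamma alpha eta : R) (Hgamma : 0 < gamma) (Halpha : 0 < alpha) (Heta : 0 < eta)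
  (Halpha_ge : alpha >= / 2 * (gamma ^ 2 * beta ^ 2 + eta))
  (x : nat -> vec) (Q : nat -> vec)
  (Hx0 : X0 (x 0%nat))
  (HQ0 : forall k, (k < m)%nat -> Q 0%nat k = 0)
  (HQ : forall t k, (k < m)%nat ->
      Q (S t) k = Rmax (- (gamma * g (x t) k)) (Q t k + gamma * g (x t) k))
  (Hxmin : forall t, X0 (x (S t)) /\
      forall y, X0 y ->
        dot n (df t (x t)) (vsub (x (S t)) (x t))
        + dot m (vadd (Q (S t)) (vscale gamma (g (x t)))) (vscale gamma (g (x (S t))))
        + alpha * norm n (vsub (x (S t)) (x t)) ^ 2
        <=
        dot n (df t (x t)) (vsub y (x t))
        + dot m (vadd (Q (S t)) (vscale gamma (g (x t)))) (vscale gamma (g y))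
        + alpha * norm n (vsub y (x t)) ^ 2)
  (xs : vec) (Hxs : X0 xs) (Hgxs : forall k, (k < m)%nat -> g xs k <= 0) :
  let L := fun t => / 2 * norm m (Q t) ^ 2 in
  let Delta := fun t => L (S t) - L t in
  forall t, (1 <= t)%nat ->
    Delta (S t) + f t (x t)
    <= f t xs
       + alpha * (norm n (vsub xs (x t)) ^ 2 - norm n (vsub xs (x (S t))) ^ 2)
       + / 2 * (norm m (vscale gamma (g (x (S t)))) ^ 2 - norm m (vscale gamma (g (x t))) ^ 2)
       + D ^ 2 / (2 * eta).
Proof.
  intros L Delta t _.
  assert (HxX0 : forall s, X0 (x s)) by (intros [|s]; [exact Hx0 | apply Hxmin]).
  destruct (Hxmin t) as [Hz Hmin].
  set (xt := x t) in *; set (z := x (S t)) in *; set (d := df t xt) in *.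
  set (w := vadd (Q (S t)) (vscale gamma (g xt))) in *.
  assert (Hw : forall k, (k < m)%nat -> 0 <= w k)
    by exact (queue_add_nonneg m (Q t) (Q (S t)) (vscale gamma (g xt)) (HQ t)).
  set (h := fun y => dot n d (vsub y xt) + dot m w (vscale gamma (g y))).
  assert (Hh : Rn_convex_on X0 h).
  { apply Rn_convex_on_add; [apply Rn_convex_on_dot_sub|].
    apply Rn_convex_on_dot_nonneg; [exact Hw|].
    intros k Hk a b l _ _ Hl.
    pose proof (Hgconv k Hk a b l I I Hl); unfold vscale in *; nra. }
  assert (Hprox := prox_three_point n X0 h alpha xt z xs HX0cv Hh ltac:(lra) Hz Hxs Hmin).
  assert (Hwxs : dot m w (vscale gamma (g xs)) <= 0).
  { apply dot_nonneg_le0; [exact Hw|].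
    intros k Hk; unfold vscale; pose proof (Hgxs k Hk); nra. }
  assert (Hgrad : f t xt + dot n d (vsub xs xt) <= f t xs).
  { destruct (Hf t) as [U [_ [_ [HXU [Hconv Hgr]]]]].
    apply (convex_gradient_ineq n U);
      [exact Hconv | apply HXU, HxX0 | apply HXU, Hxs | apply Hgr, HXU, HxX0]. }
  assert (Hdrift := queue_drift_le m (Q (S t)) (Q (S (S t))) (vscale gamma (g z)) (HQ (S t))).
  rewrite (dot_add_sub_split m _ (vscale gamma (g xt))), dot_self_sub_scale in Hdrift.
  fold w in Hdrift.
  assert (Hlip2 : gamma ^ 2 * dot m (vsub (g z) (g xt)) (vsub (g z) (g xt))
                  <= gamma ^ 2 * (beta ^ 2 * dot n (vsub z xt) (vsub z xt))).
  { apply Rmult_le_compat_l; [apply pow2_ge_0|].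
    rewrite <- !norm_sqr, <- Rpow_mult_distr.
    apply pow_incr; split; [apply norm_nonneg | apply Hlip; [exact Hz | apply HxX0]]. }
  assert (Hyoung := dot_young n d (vsub z xt) eta Heta).
  assert (HdD : dot n d d / (2 * eta) <= D ^ 2 / (2 * eta)).
  { apply Rmult_le_compat_r; [apply Rlt_le, Rinv_0_lt_compat; lra|].
    rewrite <- norm_sqr; apply pow_incr; split; [apply norm_nonneg | apply HdfD, HxX0]. }
  assert (Hstep : 0 <= (alpha - / 2 * (gamma ^ 2 * beta ^ 2 + eta)) * dot n (vsub z xt) (vsub z xt))
    by (apply Rmult_le_pos; [lra | apply dot_self_nonneg]).
  unfold Delta, L, h in *; rewrite !norm_sqr in *.
  lra.
Qed.
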